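(* Consider the Data Collection process with parameter $\beta$ on a connected weighted graph $G=(V,E,w)$ with sink $u_s$ and relative rate vector $\bm{J}$, and suppose the chain $\{Q^\beta_t\}$ is ergodic with stationary distribution $\pi$ under which $\mathbb{E}_\pi[Q(u)]<\infty$ for every $u\ne u_s$. Let $\bm{\eta}\in\mathbb{R}^V$ be the vector of steady-state queue occupancy probabilities ($\bm{\eta}_u=\pi(Q(u)>0)$ for $u\ne u_s$, $\bm{\eta}_{u_s}=0$). Then $\bm{\eta}^T(I-\mathcal{P})=\beta\bm{J}^T$; equivalently, the vector $\bm{x}$ with $\bm{x}_u=\bm{\eta}_u/d_u$ satisfies $\bm{x}^TL=\beta\bm{J}^T$.
   Context: Graph notation: for $u\in V$, the generalized degree is $d_u=\sum_{v:(u,v)\in E}w_{uv}$; $A$ is the weighted adjacency matrix ($A_{uv}=w_{uv}$ if $(u,v)\in E$, else $0$), $D=\mathrm{diag}(d_u)$, $L=D-A$, and $\mathcal{P}=D^{-1}A$ is the transition matrix of the natural random walk, $\mathcal{P}(u,v)=w_{uv}/d_u$. Data Collection process: fix a sink $u_s\in V$ and a set of sources $V_s\subseteq V\setminus\{u_s\}$. The relative rate vector $\bm{J}\in\mathbb{R}^{V}$ satisfies $\bm{J}_v>0$ for $v\in V_s$, $\bm{J}_v=0$ for $v\in V\setminus(V_s\cup\{u_s\})$, and $\bm{J}_{u_s}=-\sum_{v\ne u_s}\bm{J}_v$. Given $\beta>0$ with $\beta\bm{J}_v\le1$ for all $v\in V_s$, the Data Collection process with parameter $\beta$ is the discrete-time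 Markov chain $\{Q^\beta_t\}_{t\ge0}$ on $(\mathbb{N}\cup\{0\})^{V\setminus\{u_s\}}$, where $Q^\beta_t(v)$ is the number of packets in the queue of node $v$ at time $t$, evolving as follows at each step: each $v\in V_s$ independently generates a new packet with probability $\beta\bm{J}_v$ (Bernoulli) and places it in its queue; each node $u\ne u_s$ with nonempty queue picks one packet from its queue and independently picks a neighbor $v$ with probability $w_{uv}/d_u$, and transmits the packet to $v$: the packet is removed from $u$'s queue and added to $v$'s queue if $v\ne u_s$, or removed from the system if $v=u_s$. The sink has no queue. *)

From Stdlib Require Import Reals Relations.
From HB Require Import structures.
From mathcomp Require Import all_boot.
Open Scope R_scope.

Set Implicit Arguments.
Unset Strict Implicit.
Unset Printing Implicit Defensive.

Lemma Rplus_assoc' : associative Rplus.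
Proof. by move=> a b c; rewrite Rplus_assoc. Qed.
Lemma Rmult_assoc' : associative Rmult.
Proof. by move=> a b c; rewrite Rmult_assoc. Qed.
HB.instance Definition _ := Monoid.isComLaw.Build R 0 Rplus
  Rplus_assoc' Rplus_comm Rplus_0_l.
HB.instance Definition _ := Monoid.isComLaw.Build R 1 Rmult
  Rmult_assoc' Rmult_comm Rmult_1_l.

Section DC.
Variable V : finType.

Definition edge (w : V -> V -> R) (u v : V) : Prop := (0 < w u v).

Definition weighted_graph (w : V -> V -> R) : Prop :=
  (forall u v, 0 <= w u v) /\ (forall u v, w u v = w v u).

Definition connected_graph (w : V -> V -> R) : Prop :=
  forall u v, clos_refl_trans V (edge w) u v.

Definition deg (w : V -> V -> R) (u : V) : R := \big[Rplus/0]_(v : V) w u v.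
Definition adjA (w : V -> V -> R) (u v : V) : R := w u v.
Definition degD (w : V -> V -> R) (u v : V) : R := if u == v then deg w u else 0.
Definition lap (w : V -> V -> R) (u v : V) : R := (degD w u v - adjA w u v).
Definition Ptrans (w : V -> V -> R) (u v : V) : R := (w u v / deg w u).

(* A state is a queue-length vector; the sink coordinate is always 0
   (states with x us <> 0 are not reachable and carry no stationary mass). *)
Definition state := {ffun V -> nat}.
Definition valid_state (us : V) (x : state) : Prop := x us = 0%N.

(* One step given generation outcomes b and transmission targets t:
   a node u <> us with Q_t(u) > 0 sends one packet to t u; each node v
   receives its generated packet (b v) and all packets sent to it. *)
Definition dc_next (us : V) (x : state) (b : {ffun V -> bool})
    (t : {ffun V -> V}) : state :=
  [ffun v => if v == us then 0%N else
     (x v + b v - (0 < x v) + #|[set u | (u != us) && (0 < x u) && (t u == v)]|)%N].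

Definition gen_prob (J : V -> R) (beta : R) (us : V) (b : {ffun V -> bool}) : R :=
  \big[Rmult/1]_(v : V)
     (if v == us then (if b v then 0 else 1)
      else if b v then (beta * J v) else (1 - beta * J v)).

(* probability of the target choice t (independent, w_{uv}/d_u, for busy u;
   idle nodes get the dummy deterministic choice t u = u) *)
Definition tgt_prob (w : V -> V -> R) (us : V) (x : state) (t : {ffun V -> V}) : R :=
  \big[Rmult/1]_(u : V)
     (if (u != us) && (0 < x u)%N then Ptrans w u (t u)
      else if t u == u then 1 else 0).

Definition dc_P (w : V -> V -> R) (J : V -> R) (beta : R) (us : V)
    (x y : state) : R :=
  \big[Rplus/0]_(b : {ffun V -> bool}) \big[Rplus/0]_(t : {ffun V -> V})
     (gen_prob J beta us b * tgt_prob w us x t *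
        (if dc_next us x b t == y then 1 else 0)).

Inductive reach (K : state -> state -> R) : nat -> state -> state -> Prop :=
| reach0 x : reach K 0 x x
| reachS n x y z : (0 < K x y) -> reach K n y z -> reach K n.+1 x z.

Definition irreducible (K : state -> state -> R) (us : V) : Prop :=
  forall x y, valid_state us x -> valid_state us y -> exists n, reach K n x y.

Definition aperiodic (K : state -> state -> R) (us : V) : Prop :=
  forall x, valid_state us x -> exists N, forall n, (N <= n)%N -> reach K n x x.

Definition sums (f : state -> R) (s : R) : Prop :=
  (forall x, 0 <= f x) /\
  is_lub (fun r => exists l : seq state, uniq l /\ r = \big[Rplus/0]_(x <- l) f x) s.

Definition stationary (K : state -> state -> R) (pi : state -> R) : Prop :=
  sums pi 1 /\ forall y, sums (fun x => (pi x * K x y)) (pi y).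

End DC.

(* At a non-sink node v the queue evolves as
     Q'(v) = Q(v) - [Q(v) > 0] + (generated packet) + (arrivals),
   and the expected arrivals given the state are sum_u [Q(u) > 0] P(u, v).
   Under the stationary law pi, E[Q'(v)] = E[Q(v)] < oo, so subtracting the
   two sides leaves eta(v) = beta J(v) + sum_u eta(u) P(u, v).  Since the
   rows of P are stochastic and J sums to zero, the sink equation follows by
   summing all the others; the Laplacian form is a rescaling by degrees. *)
Set Warnings "-notation-overridden,-redundant-canonical-projection".
From Stdlib Require Import Reals Relations Lra Classical FunctionalExtensionality.
From HB Require Import structures.
From mathcomp Require Import all_boot.
Open Scope R_scope.
Set Implicit Arguments.
Unset Strict Implicit.

HB.instance Definition _ := Monoid.isMulLaw.Build R 0 Rmult Rmult_0_l Rmult_0_r.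
HB.instance Definition _ := Monoid.isAddLaw.Build R Rmult Rplus
  Rmult_plus_distr_r Rmult_plus_distr_l.

Lemma bigR_ge0 (I : Type) (r : seq I) (P : pred I) (F : I -> R) :
  (forall i, P i -> 0 <= F i) -> 0 <= \big[Rplus/0]_(i <- r | P i) F i.
Proof. by move=> F0; apply: (big_ind (fun x => 0 <= x)) => //; [lra | move=> *; lra]. Qed.

Lemma bigR_le (I : Type) (r : seq I) (P : pred I) (F G : I -> R) :
  (forall i, P i -> F i <= G i) ->
  \big[Rplus/0]_(i <- r | P i) F i <= \big[Rplus/0]_(i <- r | P i) G i.
Proof. by move=> FG; apply: (big_ind2 (fun x y => x <= y)) => //; [lra | move=> *; lra]. Qed.

Lemma bigR_le_in (I : eqType) (r : seq I) (F G : I -> R) :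
  (forall i, i \in r -> F i <= G i) ->
  \big[Rplus/0]_(i <- r) F i <= \big[Rplus/0]_(i <- r) G i.
Proof.
by move=> FG; rewrite big_seq [X in _ <= X]big_seq; apply: bigR_le.
Qed.

Lemma bigR_const (I : Type) (r : seq I) (a : R) :
  \big[Rplus/0]_(i <- r) a = INR (size r) * a.
Proof.
elim: r => [|x r IH]; first by rewrite big_nil /=; lra.
by rewrite big_cons IH; change (size (x :: r)) with (Datatypes.S (size r)); rewrite S_INR; lra.
Qed.

Lemma bigR_sub (I : Type) (r : seq I) (F G : I -> R) :
  \big[Rplus/0]_(i <- r) (F i - G i) =
  \big[Rplus/0]_(i <- r) F i - \big[Rplus/0]_(i <- r) G i.
Proof. by elim: r => [|a r IH]; rewrite ?big_nil ?big_cons ?IH; lra. Qed.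

Lemma prodR_ge0 (I : Type) (r : seq I) (F : I -> R) :
  (forall i, 0 <= F i) -> 0 <= \big[Rmult/1]_(i <- r) F i.
Proof. by move=> F0; apply: (big_ind (fun x => 0 <= x)) => //; [lra | exact: Rmult_le_pos]. Qed.

Lemma bigR_subset (I : eqType) (L L' : seq I) (F : I -> R) :
  uniq L -> uniq L' -> {subset L <= L'} -> (forall i, 0 <= F i) ->
  \big[Rplus/0]_(i <- L) F i <= \big[Rplus/0]_(i <- L') F i.
Proof.
move=> uL uL' sub F0; rewrite [X in _ <= X](bigID (fun i => i \in L)) /=.
have -> : \big[Rplus/0]_(i <- L' | i \in L) F i = \big[Rplus/0]_(i <- L) F i.
  rewrite -big_filter; apply: perm_big; apply: uniq_perm => [||i].
  - exact: filter_uniq.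
  - exact: uL.
  by rewrite mem_filter; case iL: (i \in L) => //=; exact: sub.
have := @bigR_ge0 _ L' (fun i => i \notin L) F (fun i _ => F0 i); lra.
Qed.

Lemma bigR_pick (I : eqType) (L : seq I) (a : I) (g : R) :
  uniq L -> \big[Rplus/0]_(y <- L) (if a == y then g else 0) = if a \in L then g else 0.
Proof.
elim: L => [|y L IH] /=; first by rewrite big_nil.
move=> /andP [yL uL]; rewrite big_cons IH // in_cons.
by case: (eqVneq a y) => [->|_] /=; [rewrite (negPf yL); lra | case: (a \in L); lra].
Qed.

Lemma Rmult_div_succ_lt (k e : R) : 0 <= k -> 0 < e -> k * (e / (k + 1)) < e.
Proof.
move=> k0 e0; have -> : k * (e / (k + 1)) = e - e / (k + 1) by field; lra.
have : 0 < e / (k + 1) by apply: Rdiv_lt_0_compat; lra.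
lra.
Qed.

Lemma Rle_epsilon (a b k : R) :
  0 <= k -> (forall eps, 0 < eps -> a <= b + k * eps) -> a <= b.
Proof.
move=> k0 H; apply: Rnot_lt_le => ba.
have := H ((a - b) / (k + 1)) ltac:(apply: Rdiv_lt_0_compat; lra).
have := @Rmult_div_succ_lt k (a - b) k0 ltac:(lra); lra.
Qed.

Section NonnegativeSums.
Variable V : finType.
Notation S := (state V).
Implicit Types (f g : S -> R) (L : seq S).

Lemma sums_ge0 f s : sums f s -> forall x, 0 <= f x.
Proof. by case. Qed.

Lemma sums_ub f s L : sums f s -> uniq L -> \big[Rplus/0]_(x <- L) f x <= s.
Proof. by case=> _ [ub _] uL; apply: ub; exists L. Qed.

Lemma sums_value_ge0 f s : sums f s -> 0 <= s.
Proof. by move=> fs; have := @sums_ub f s [::] fs; rewrite big_nil; apply. Qed.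

Lemma sums_approx f s : sums f s -> forall eps, 0 < eps ->
  exists L, uniq L /\ s - eps < \big[Rplus/0]_(x <- L) f x.
Proof.
case=> _ [_ lub] eps eps0; apply: NNPP => noL.
have : s <= s - eps; last lra.
apply: lub => _ [L [uL ->]]; apply: Rnot_lt_le => Lbig; apply: noL; by exists L.
Qed.

Lemma sums_intro f s : (forall x, 0 <= f x) ->
  (forall L, uniq L -> \big[Rplus/0]_(x <- L) f x <= s) ->
  (forall eps, 0 < eps -> exists L, uniq L /\ s - eps < \big[Rplus/0]_(x <- L) f x) ->
  sums f s.
Proof.
move=> f0 ub approx; split=> //; split=> [_ [L [uL ->]]|M HM]; first exact: ub.
apply: Rnot_lt_le => Ms; have [L [uL HL]] := approx (s - M) ltac:(lra).
have : \big[Rplus/0]_(x <- L) f x <= M by apply: HM; exists L.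
lra.
Qed.

Lemma sums_unique f s1 s2 : sums f s1 -> sums f s2 -> s1 = s2.
Proof.
move=> [_ [ub1 lub1]] [_ [ub2 lub2]].
by apply: Rle_antisym; [apply: lub1 | apply: lub2].
Qed.

Lemma sums_ext f g s : (forall x, f x = g x) -> sums f s -> sums g s.
Proof. by move=> /functional_extensionality <-. Qed.

Lemma sums0 : sums (fun _ : S => 0) 0.
Proof.
apply: sums_intro => [x|L _|eps eps0]; first lra; first by rewrite big1 //; lra.
by exists [::]; rewrite big_nil; split => //; lra.
Qed.

Lemma undup_cat_subl L1 L2 : {subset L1 <= undup (L1 ++ L2)}.
Proof. by move=> x; rewrite mem_undup mem_cat => ->. Qed.

Lemma undup_cat_subr L1 L2 : {subset L2 <= undup (L1 ++ L2)}.
Proof. by move=> x; rewrite mem_undup mem_cat => ->; rewrite orbT. Qed.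

Lemma sumsD f g a b : sums f a -> sums g b -> sums (fun x => f x + g x) (a + b).
Proof.
move=> fa gb; apply: sums_intro => [x|L uL|eps eps0].
- by have := sums_ge0 fa x; have := sums_ge0 gb x; lra.
- by rewrite big_split /=; have := sums_ub fa uL; have := sums_ub gb uL; lra.
have [L1 [u1 H1]] := sums_approx fa (eps := eps / 2) ltac:(lra).
have [L2 [u2 H2]] := sums_approx gb (eps := eps / 2) ltac:(lra).
pose L : seq S := undup (L1 ++ L2); have uL : uniq L := undup_uniq _.
have fL : \big[Rplus/0]_(x <- L1) f x <= \big[Rplus/0]_(x <- L) f x.
  exact: bigR_subset u1 uL (@undup_cat_subl L1 L2) (sums_ge0 fa).
have gL : \big[Rplus/0]_(x <- L2) g x <= \big[Rplus/0]_(x <- L) g x.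
  exact: bigR_subset u2 uL (@undup_cat_subr L1 L2) (sums_ge0 gb).
by exists L; split => //; rewrite big_split /=; lra.
Qed.

Lemma sumsZ c f a : 0 <= c -> sums f a -> sums (fun x => c * f x) (c * a).
Proof.
move=> c0 fa; case: (Req_dec c 0) => [->|cn0].
  by apply: (sums_ext (f := fun _ => 0)) => [x|]; rewrite Rmult_0_l //; exact: sums0.
apply: sums_intro => [x|L uL|eps eps0].
- by have := sums_ge0 fa x; nra.
- by rewrite -big_distrr /=; apply: Rmult_le_compat_l => //; exact: sums_ub.
have [L [uL HL]] := sums_approx fa (eps := eps / c) ltac:(apply: Rdiv_lt_0_compat; lra).
exists L; split => //; rewrite -big_distrr /=.
have -> : c * a - eps = c * (a - eps / c) by field.
by apply: Rmult_lt_compat_l => //; lra.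
Qed.

Lemma sums_big (I : Type) (r : seq I) (F : I -> S -> R) (a : I -> R) :
  (forall i, sums (F i) (a i)) ->
  sums (fun x => \big[Rplus/0]_(i <- r) F i x) (\big[Rplus/0]_(i <- r) a i).
Proof.
move=> Fa; elim: r => [|i r IH].
  by rewrite big_nil; apply: (sums_ext (f := fun _ => 0)) => [x|]; rewrite ?big_nil //; exact: sums0.
rewrite big_cons; apply: (sums_ext (f := fun x => F i x + \big[Rplus/0]_(j <- r) F j x)).
  by move=> x; rewrite big_cons.
exact: sumsD.
Qed.

Lemma sums_approx_family (G : S -> S -> R) (a : S -> R) :
  (forall z, sums (G z) (a z)) -> forall eps, 0 < eps -> forall L : seq S,
  exists Y : seq S, uniq Y /\
    forall z, z \in L -> a z - eps < \big[Rplus/0]_(y <- Y) G z y.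
Proof.
move=> Ga eps eps0; elim=> [|z L [Y [uY HY]]]; first by exists [::].
have [Y1 [u1 H1]] := sums_approx (Ga z) eps0.
have uY' := undup_uniq (Y1 ++ Y).
exists (undup (Y1 ++ Y)); split => // z'; rewrite in_cons => /orP [/eqP ->|z'L].
  exact: Rlt_le_trans H1 (bigR_subset u1 uY' (@undup_cat_subl Y1 Y) (sums_ge0 (Ga z))).
exact: Rlt_le_trans (HY z' z'L) (bigR_subset uY uY' (@undup_cat_subr Y1 Y) (sums_ge0 (Ga z'))).
Qed.

Section Tonelli.
Variables (F : S -> S -> R) (col row : S -> R) (Sv : R).
Hypothesis F_col : forall y, sums (fun x => F x y) (col y).
Hypothesis col_Sv : sums col Sv.
Hypothesis F_row : forall x, sums (fun y => F x y) (row x).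

Lemma tonelli_ub L : uniq L -> \big[Rplus/0]_(x <- L) row x <= Sv.
Proof.
move=> uL; apply: (@Rle_epsilon _ _ (INR (size L))); first exact: pos_INR.
move=> eps eps0; have [Y [uY HY]] := sums_approx_family F_row eps0 L.
have rowY : \big[Rplus/0]_(x <- L) row x <=
            \big[Rplus/0]_(x <- L) (\big[Rplus/0]_(y <- Y) F x y + eps).
  by apply: bigR_le_in => x xL; have := HY x xL; lra.
rewrite big_split /= bigR_const exchange_big /= in rowY.
have colY : \big[Rplus/0]_(y <- Y) \big[Rplus/0]_(x <- L) F x y <=
            \big[Rplus/0]_(y <- Y) col y.
  by apply: bigR_le => y _; exact: sums_ub (F_col y) uL.
have := sums_ub col_Sv uY; lra.
Qed.

Lemma tonelli_approx eps : 0 < eps ->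
  exists L, uniq L /\ Sv - eps < \big[Rplus/0]_(x <- L) row x.
Proof.
move=> eps0; have [Y [uY HY]] := sums_approx col_Sv (eps := eps / 2) ltac:(lra).
have nY0 := pos_INR (size Y); set e := eps / 2 / (INR (size Y) + 1).
have e0 : 0 < e by apply: Rdiv_lt_0_compat; lra.
have [X [uX HX]] := sums_approx_family F_col e0 Y.
exists X; split => //.
have rowX : \big[Rplus/0]_(y <- Y) \big[Rplus/0]_(x <- X) F x y <=
            \big[Rplus/0]_(x <- X) row x.
  by rewrite exchange_big /=; apply: bigR_le => x _; exact: sums_ub (F_row x) uY.
have colX : \big[Rplus/0]_(y <- Y) (col y - e) <=
            \big[Rplus/0]_(y <- Y) \big[Rplus/0]_(x <- X) F x y.
  by apply: bigR_le_in => y yY; have := HX y yY; lra.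
rewrite bigR_sub bigR_const in colX.
have := @Rmult_div_succ_lt (INR (size Y)) (eps / 2) nY0 ltac:(lra); rewrite -/e.
lra.
Qed.

Lemma tonelli : sums row Sv.
Proof.
apply: sums_intro; [|exact: tonelli_ub|exact: tonelli_approx].
by move=> x; exact: sums_value_ge0 (F_row x).
Qed.

End Tonelli.

Lemma sums_image (I : finType) (c : I -> R) (yv : I -> S) (phi : S -> R) :
  (forall i, 0 <= c i) -> (forall y, 0 <= phi y) ->
  sums (fun y => \big[Rplus/0]_(i : I) (c i * (if yv i == y then 1 else 0)) * phi y)
       (\big[Rplus/0]_(i : I) (c i * phi (yv i))).
Proof.
move=> c0 phi0.
have partial L : uniq L ->
  \big[Rplus/0]_(y <- L) (\big[Rplus/0]_(i : I) (c i * (if yv i == y then 1 else 0)) * phi y)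
  = \big[Rplus/0]_(i : I) (if yv i \in L then c i * phi (yv i) else 0).
  move=> uL; under eq_bigr do rewrite big_distrl /=.
  rewrite exchange_big /=; apply: eq_bigr => i _; rewrite -(bigR_pick _ _ uL).
  by apply: eq_bigr => y _; case: (eqVneq (yv i) y) => [->|_]; lra.
apply: sums_intro => [y|L uL|eps eps0].
- apply: Rmult_le_pos => //; apply: bigR_ge0 => i _.
  by case: eqP => _; have := c0 i; lra.
- rewrite partial //; apply: bigR_le => i _.
  by case: (yv i \in L) => //; have := c0 i; have := phi0 (yv i); nra.
exists (undup [seq yv i | i <- enum I]); split; first exact: undup_uniq.
rewrite partial ?undup_uniq //.
rewrite [X in _ < X](eq_bigr (fun i => c i * phi (yv i))) => [|i _]; first lra.
by rewrite mem_undup (map_f yv (mem_enum I i)).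
Qed.

End NonnegativeSums.

Lemma product_total (I J : finType) (f : I -> J -> R) :
  (forall i, \big[Rplus/0]_(j : J) f i j = 1) ->
  \big[Rplus/0]_(t : {ffun I -> J}) \big[Rmult/1]_(i : I) f i (t i) = 1.
Proof. by move=> f1; rewrite -(bigA_distr_bigA f) big1. Qed.

Lemma product_marginal (I J : finType) (f : I -> J -> R) (i0 : I) (phi : J -> R) :
  (forall i, i != i0 -> \big[Rplus/0]_(j : J) f i j = 1) ->
  \big[Rplus/0]_(t : {ffun I -> J}) ((\big[Rmult/1]_(i : I) f i (t i)) * phi (t i0))
  = \big[Rplus/0]_(j : J) (f i0 j * phi j).
Proof.
move=> f1; pose f' i j := if i == i0 then f i j * phi j else f i j.
have prod_f' (t : {ffun I -> J}) :
    (\big[Rmult/1]_(i : I) f i (t i)) * phi (t i0) = \big[Rmult/1]_(i : I) f' i (t i).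
  rewrite (bigD1 i0) // [in RHS](bigD1 i0) //= /f' eqxx.
  by rewrite [X in _ = _ * X](eq_bigr (fun i => f i (t i))) => [|i /negPf ->]; first ring.
rewrite (eq_bigr _ (fun t _ => prod_f' t)) -(bigA_distr_bigA f') /=.
rewrite (bigD1 i0) //= [X in _ * X]big1 ?Rmult_1_r => [|i ni].
  by apply: eq_bigr => j _; rewrite /f' eqxx.
by rewrite -(f1 i ni); apply: eq_bigr => j _; rewrite /f' (negPf ni).
Qed.

Lemma product_mean_additive (I1 I2 : finType) (a : I1 -> R) (b : I2 -> R) (p : R)
    (q : I1 -> R) (r : I2 -> R) :
  \big[Rplus/0]_(i : I1) a i = 1 -> \big[Rplus/0]_(j : I2) b j = 1 ->
  \big[Rplus/0]_(i : I1) \big[Rplus/0]_(j : I2) (a i * b j * (p + q i + r j))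
  = p + \big[Rplus/0]_(i : I1) (a i * q i) + \big[Rplus/0]_(j : I2) (b j * r j).
Proof.
move=> a1 b1.
have inner i : \big[Rplus/0]_(j : I2) (a i * b j * (p + q i + r j))
    = p * a i + a i * q i + a i * \big[Rplus/0]_(j : I2) (b j * r j).
  rewrite (eq_bigr (fun j => a i * (p + q i) * b j + a i * (b j * r j))) => [|j _]; last ring.
  by rewrite big_split /= -!big_distrr /= b1; ring.
by rewrite (eq_bigr _ (fun i _ => inner i)) !big_split /= -!big_distrl -big_distrr /= a1; ring.
Qed.

Lemma card_set_INR (T : finType) (P : pred T) :
  INR #|[set u | P u]| = \big[Rplus/0]_(u : T) (if P u then 1 else 0).
Proof.
rewrite -sum1_card (big_morph INR plus_INR (erefl (INR 0))) big_mkcond.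
by apply: eq_bigr => u _; rewrite inE; case: (P u).
Qed.

Section Graph.
Variables (V : finType) (w : V -> V -> R).

Lemma deg_pos u u' : weighted_graph w -> connected_graph w -> u != u' -> 0 < deg w u.
Proof.
move=> [w0 _] conn uu'; have path := clos_rt_rt1n _ _ _ _ (conn u u').
inversion path as [E|y z uy _ E]; first by subst; rewrite eqxx in uu'.
rewrite /deg (bigD1 y) //=.
have := @bigR_ge0 _ (index_enum V) (fun i => i != y) (w u) (fun i _ => w0 u i).
rewrite /edge in uy; lra.
Qed.

Lemma Ptrans_sum u : 0 < deg w u -> \big[Rplus/0]_(v : V) Ptrans w u v = 1.
Proof. by move=> d0; rewrite /Ptrans /Rdiv -big_distrl /= -/(deg w u); field; lra. Qed.

Lemma Ptrans_ge0 u v : (forall u v, 0 <= w u v) -> 0 < deg w u -> 0 <= Ptrans w u v.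
Proof.
move=> w0 d0; rewrite /Ptrans /Rdiv; apply: Rmult_le_pos => //.
by apply: Rlt_le; apply: Rinv_0_lt_compat.
Qed.

End Graph.

Section DataCollectionStep.
Variables (V : finType) (w : V -> V -> R) (J : V -> R) (beta : R) (us : V).
Hypothesis w_ge0 : forall u v, 0 <= w u v.
Hypothesis deg_gt0 : forall u, u != us -> 0 < deg w u.
Hypothesis rate_prob : forall v, v != us -> 0 <= beta * J v <= 1.
Implicit Types (x : state V) (b : {ffun V -> bool}) (t : {ffun V -> V}).

Local Notation busy x u := ((u != us) && leq 1 (x u)).

Definition gen_factor (v : V) (bo : bool) : R :=
  if v == us then (if bo then 0 else 1)
  else if bo then beta * J v else 1 - beta * J v.

Definition tgt_factor x (u v : V) : R :=
  if busy x u then Ptrans w u v else if v == u then 1 else 0.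

Lemma gen_factor_sum v : \big[Rplus/0]_(bo : bool) gen_factor v bo = 1.
Proof. by rewrite big_bool /gen_factor /=; case: (v == us); lra. Qed.

Lemma tgt_factor_sum x u : \big[Rplus/0]_(v : V) tgt_factor x u v = 1.
Proof.
rewrite /tgt_factor; case: (boolP (busy x u)) => [/andP [uus _]|_].
  exact: Ptrans_sum (deg_gt0 uus).
by rewrite (bigD1 u) //= eqxx big1 => [|v /negPf ->]; lra.
Qed.

Lemma gen_prob_ge0 b : 0 <= gen_prob J beta us b.
Proof.
apply: prodR_ge0 => v; case: (boolP (v == us)) => [_|vus]; first by case: (b v); lra.
by have := rate_prob vus; case: (b v); lra.
Qed.

Lemma tgt_prob_ge0 x t : 0 <= tgt_prob w us x t.
Proof.
apply: prodR_ge0 => u; case: (boolP (busy x u)) => [/andP [uus _]|_].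
  exact: Ptrans_ge0 (deg_gt0 uus).
by case: (t u == u); lra.
Qed.

Lemma gen_prob_total : \big[Rplus/0]_b gen_prob J beta us b = 1.
Proof. exact: product_total gen_factor_sum. Qed.

Lemma tgt_prob_total x : \big[Rplus/0]_t tgt_prob w us x t = 1.
Proof. exact: product_total (tgt_factor_sum x). Qed.

Lemma mean_generation v : v != us ->
  \big[Rplus/0]_b (gen_prob J beta us b * INR (b v)) = beta * J v.
Proof.
move=> vus; rewrite (@product_marginal _ _ gen_factor v (fun bo : bool => INR bo)) => [|i _]; last exact: gen_factor_sum.
by rewrite big_bool /gen_factor /= (negPf vus) /=; lra.
Qed.

Lemma mean_arrivals x v :
  \big[Rplus/0]_t (tgt_prob w us x t *
     \big[Rplus/0]_(u : V) (if busy x u then (if t u == v then 1 else 0) else 0))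
  = \big[Rplus/0]_(u : V) (if busy x u then Ptrans w u v else 0).
Proof.
under eq_bigr do rewrite big_distrr /=.
rewrite exchange_big /=; apply: eq_bigr => u _.
rewrite (@product_marginal _ _ (tgt_factor x) u
   (fun j => if busy x u then (if j == v then 1 else 0) else 0)) => [|i _]; last first.
  exact: tgt_factor_sum.
rewrite /tgt_factor; case: (busy x u); last by rewrite big1 // => j _; lra.
by rewrite (bigD1 v) //= eqxx big1 => [|j /negPf ->]; lra.
Qed.

Lemma dc_next_queue x b t v : v != us ->
  INR (dc_next us x b t v) = INR (x v) - (if (0 < x v)%N then 1 else 0) + INR (b v) +
    \big[Rplus/0]_(u : V) (if busy x u then (if t u == v then 1 else 0) else 0).
Proof.
move=> vus; rewrite /dc_next ffunE (negPf vus) plus_INR minus_INR; last first.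
  by apply/leP; case: (x v) => // n; rewrite addSn.
rewrite plus_INR card_set_INR.
have -> : INR (0 < x v)%N = (if (0 < x v)%N then 1 else 0) by case: (0 < x v)%N.
rewrite (eq_bigr (fun u : V => if busy x u then (if t u == v then 1 else 0) else 0)) => [|u _].
  by lra.
by case: (busy x u).
Qed.

Definition next_mean x (phi : state V -> R) : R :=
  \big[Rplus/0]_b \big[Rplus/0]_t
     (gen_prob J beta us b * tgt_prob w us x t * phi (dc_next us x b t)).

Lemma next_mean_queue x v : v != us ->
  next_mean x (fun y => INR (y v)) =
  INR (x v) - (if (0 < x v)%N then 1 else 0) + beta * J v +
  \big[Rplus/0]_(u : V) (if busy x u then Ptrans w u v else 0).
Proof.
move=> vus; rewrite /next_mean.
under eq_bigr do under eq_bigr do rewrite dc_next_queue //.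
rewrite product_mean_additive ?gen_prob_total ?tgt_prob_total //.
by rewrite mean_generation // mean_arrivals.
Qed.

Lemma sums_dc_P x (pi : state V -> R) (phi : state V -> R) :
  0 <= pi x -> (forall y, 0 <= phi y) ->
  sums (fun y => pi x * dc_P w J beta us x y * phi y) (pi x * next_mean x phi).
Proof.
move=> pi0 phi0.
have image := @sums_image V ({ffun V -> bool} * {ffun V -> V})%type
  (fun p => pi x * gen_prob J beta us p.1 * tgt_prob w us x p.2)
  (fun p => dc_next us x p.1 p.2) phi.
have -> : pi x * next_mean x phi = \big[Rplus/0]_(p : {ffun V -> bool} * {ffun V -> V})
    (pi x * gen_prob J beta us p.1 * tgt_prob w us x p.2 * phi (dc_next us x p.1 p.2)).
  rewrite /next_mean big_distrr /= -(pair_bigA _ (fun b t =>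
    pi x * gen_prob J beta us b * tgt_prob w us x t * phi (dc_next us x b t))) /=.
  apply: eq_bigr => b _; rewrite big_distrr /=; apply: eq_bigr => t _; ring.
apply: (sums_ext _ (image _ phi0)) => [y|p].
  rewrite /dc_P pair_bigA /= big_distrr /= !big_distrl /=.
  by apply: eq_bigr => p _; ring.
by apply: Rmult_le_pos; [apply: Rmult_le_pos; [|apply: gen_prob_ge0] | apply: tgt_prob_ge0].
Qed.

Lemma stationary_next_mean (pi phi : state V -> R) (s : R) :
  stationary (dc_P w J beta us) pi -> (forall y, 0 <= phi y) ->
  sums (fun y => pi y * phi y) s -> sums (fun x => pi x * next_mean x phi) s.
Proof.
move=> [pi1 stat] phi0 piphi.
apply: (@tonelli V (fun x y => pi x * dc_P w J beta us x y * phi y)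
                   (fun y => pi y * phi y)) => // [y|x].
  have := sumsZ (phi0 y) (stat y); rewrite Rmult_comm.
  by apply: sums_ext => x; ring.
exact: sums_dc_P (sums_ge0 pi1 x) phi0.
Qed.

(* Balance at a non-sink node: in steady state the mean queue length at v is
   constant, so departures (rate eta v) equal generations (beta * J v) plus
   arrivals (sum of eta u * P(u, v)). *)
Lemma balance_off_sink (pi : state V -> R) (eta : V -> R) (v : V) :
  stationary (dc_P w J beta us) pi ->
  (forall u, u != us -> sums (fun x : state V => if (0 < x u)%N then pi x else 0) (eta u)) ->
  eta us = 0 -> v != us ->
  (exists s, sums (fun x : state V => pi x * INR (x v)) s) ->
  eta v - \big[Rplus/0]_(u : V) (eta u * Ptrans w u v) = beta * J v.
Proof.
move=> stat etaH eta_us vus [s queue_mean].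
have flow : \big[Rplus/0]_(u : V) (eta u * Ptrans w u v) =
    \big[Rplus/0]_(u : V) (if u != us then Ptrans w u v * eta u else 0).
  apply: eq_bigr => u _; case: (eqVneq u us) => [->|_] /=; last by ring.
  by rewrite eta_us; ring.
have drift x : pi x * next_mean x (fun y => INR (y v)) + (if (0 < x v)%N then pi x else 0)
  = pi x * INR (x v) + (beta * J v * pi x + \big[Rplus/0]_(u : V)
      (if u != us then Ptrans w u v * (if (0 < x u)%N then pi x else 0) else 0)).
  rewrite next_mean_queue // !Rmult_plus_distr_l big_distrr /=.
  rewrite (eq_bigr (fun u : V => if u != us then
      Ptrans w u v * (if (0 < x u)%N then pi x else 0) else 0)) => [|u _].
    by case: (0 < x v)%N; ring.
  by case: (u != us); case: (0 < x u)%N => /=; ring.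
have lhs := sums_ext drift (sumsD (stationary_next_mean stat (fun y => pos_INR (y v))
  queue_mean) (etaH v vus)).
have rhs : sums (fun x => pi x * INR (x v) + (beta * J v * pi x + \big[Rplus/0]_(u : V)
      (if u != us then Ptrans w u v * (if (0 < x u)%N then pi x else 0) else 0)))
    (s + (beta * J v * 1 +
      \big[Rplus/0]_(u : V) (if u != us then Ptrans w u v * eta u else 0))).
  apply: sumsD => //; apply: sumsD.
    by apply: sumsZ; [have := rate_prob vus; lra | exact: proj1 stat].
  apply: sums_big => u; case: (boolP (u != us)) => uus; last exact: sums0.
  by apply: sumsZ; [exact: Ptrans_ge0 (deg_gt0 uus) | exact: etaH].
by rewrite flow; have := sums_unique lhs rhs; lra.
Qed.

End DataCollectionStep.

(* Balance at the sink follows from the balance everywhere else: summing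
   eta (I - P) over all nodes gives 0 when the rows of P out of non-sink
   nodes are stochastic and eta vanishes at the sink, while J sums to 0. *)
Lemma balance_at_sink (V : finType) (P : V -> V -> R) (eta J : V -> R) (beta : R) (us : V) :
  (forall u, u != us -> \big[Rplus/0]_(v : V) P u v = 1) -> eta us = 0 ->
  J us = (- \big[Rplus/0]_(v | v != us) J v) ->
  (forall v, v != us -> eta v - \big[Rplus/0]_(u : V) (eta u * P u v) = beta * J v) ->
  eta us - \big[Rplus/0]_(u : V) (eta u * P u us) = beta * J us.
Proof.
move=> P1 eta_us Jus off.
pose D v := eta v - \big[Rplus/0]_(u : V) (eta u * P u v).
have total : \big[Rplus/0]_(v : V) D v = 0.
  rewrite /D bigR_sub exchange_big /=.
  rewrite [X in _ - X](eq_bigr (fun u => eta u)) => [|u _]; first ring.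
  rewrite -big_distrr /=; case: (eqVneq u us) => [->|uus]; first by rewrite eta_us; ring.
  by rewrite P1 //; ring.
have off_total : \big[Rplus/0]_(v | v != us) D v = beta * \big[Rplus/0]_(v | v != us) J v.
  by rewrite big_distrr; apply: eq_bigr => v; exact: off.
rewrite (bigD1 us) //= off_total /D in total.
by rewrite Jus; lra.
Qed.

Lemma laplacian_form (V : finType) (w : V -> V -> R) (eta : V -> R) (us : V) (v : V) :
  (forall u, u != us -> 0 < deg w u) -> eta us = 0 ->
  \big[Rplus/0]_(u : V) (eta u / deg w u * lap w u v) =
  eta v - \big[Rplus/0]_(u : V) (eta u * Ptrans w u v).
Proof.
move=> deg_gt0 eta_us; rewrite /lap /degD /adjA.
rewrite (eq_bigr (fun u => eta u / deg w u * (if u == v then deg w u else 0)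
    - eta u * Ptrans w u v)) => [|u _]; last by rewrite /Ptrans /Rdiv; ring.
rewrite bigR_sub (bigD1 v) //= eqxx big1 => [|u /negPf ->]; last ring.
case: (eqVneq v us) => [->|vus]; first by rewrite eta_us /Rdiv; ring.
by have := deg_gt0 v vus => dv; field; lra.
Qed.

Theorem mainTheorem2 (V : finType) (w : V -> V -> R) (us : V) (Vs : {set V})
    (J : V -> R) (beta : R) (pi : state V -> R) (eta : V -> R) :
  weighted_graph w ->
  connected_graph w ->
  us \notin Vs ->
  (forall v, v \in Vs -> (0 < J v)) ->
  (forall v, v \notin Vs -> v != us -> J v = 0) ->
  J us = (- \big[Rplus/0]_(v | v != us) J v) ->
  (0 < beta) ->
  (forall v, v \in Vs -> (beta * J v <= 1)) ->
  (* ergodicity of Q^beta with stationary distribution pi *)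
  irreducible (dc_P w J beta us) us ->
  aperiodic (dc_P w J beta us) us ->
  stationary (dc_P w J beta us) pi ->
  (* finite expected queue lengths *)
  (forall u, u != us -> exists s, sums (fun x : state V => (pi x * INR (x u))) s) ->
  (* eta_u = pi(Q(u) > 0) for u <> us, eta_us = 0 *)
  (forall u, u != us ->
     sums (fun x : state V => if (0 < x u)%N then pi x else 0) (eta u)) ->
  eta us = 0 ->
  (forall v, (eta v - (\big[Rplus/0]_(u : V) (eta u * Ptrans w u v))) = (beta * J v)) /\
  (forall v, \big[Rplus/0]_(u : V) (eta u / deg w u * lap w u v) = (beta * J v)).
Proof.
move=> wg conn _ Jpos J0 Jus beta0 bJ1 _ _ stat finite_mean etaH eta_us.
have deg_gt0 u : u != us -> 0 < deg w u by exact: deg_pos wg conn.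
have rate_prob v : v != us -> 0 <= beta * J v <= 1.
  move=> vus; case: (boolP (v \in Vs)) => vVs; last by rewrite (J0 v vVs vus); lra.
  by have := Jpos v vVs; have := bJ1 v vVs; nra.
have off_sink v : v != us -> eta v - \big[Rplus/0]_(u : V) (eta u * Ptrans w u v) = beta * J v.
  move=> vus; apply: (balance_off_sink (proj1 wg) deg_gt0 rate_prob stat) => //.
  exact: finite_mean.
have balance v : eta v - \big[Rplus/0]_(u : V) (eta u * Ptrans w u v) = beta * J v.
  case: (eqVneq v us) => [->|]; last exact: off_sink.
  apply: balance_at_sink => // u uus; exact: Ptrans_sum (deg_gt0 u uus).
by split=> // v; rewrite (laplacian_form _ deg_gt0 eta_us).
Qed.
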